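(* Let $T$ be a tree on $N>2$ vertices with $M\ge 2$ leaves. Then $$R^+(T)\ge N(N-2)+2(N-1)\left[M+\frac{(N-M)^2}{2(N-1)-M}\right]-2(N-1).$$
   Context: For vertices $i,j$ of a connected graph $G$, $R_{ij}$ denotes the effective resistance between $i$ and $j$ when every edge is a unit resistor. The additive degree-Kirchhoff index is $R^+(G)=\sum_{i<j}(d_i+d_j)R_{ij}$, where $d_i$ is the degree of vertex $i$. *)

From HB Require Import structures.
From mathcomp Require Import all_boot all_order all_algebra.
Set Implicit Arguments. Unset Strict Implicit. Unset Printing Implicit Defensive.
Import Order.TTheory GRing.Theory Num.Theory.
Local Open Scope ring_scope.

Definition simple_graph (N : nat) (e : rel 'I_N) : Prop :=
  symmetric e /\ irreflexive e.

Definition edge_set (N : nat) (e : rel 'I_N) : {set 'I_N * 'I_N} :=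
  [set p | e p.1 p.2 && (p.1 < p.2)%N].

Definition connected_graph (N : nat) (e : rel 'I_N) : Prop :=
  forall i j : 'I_N, connect e i j.

Definition is_tree (N : nat) (e : rel 'I_N) : Prop :=
  [/\ simple_graph e, connected_graph e & #|edge_set e| = (N - 1)%N].

Definition deg (N : nat) (e : rel 'I_N) (i : 'I_N) : nat := #|[set j | e i j]|.

Definition leaves (N : nat) (e : rel 'I_N) : {set 'I_N} :=
  [set i | deg e i == 1%N].

Definition laplacian (R : ringType) (N : nat) (e : rel 'I_N) : 'M[R]_N :=
  \matrix_(i, j) (if i == j then (deg e i)%:R else if e i j then -1 else 0).

(* Effective resistance with unit resistors: R_ij = v_i - v_j where v is a
   potential with v L = e_i - e_j (L symmetric), obtained via the partial
   inverse pinvmx; for a connected graph e_i - e_j lies in the row space of L,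
   so this solves the equation, and v_i - v_j does not depend on the choice. *)
Definition eff_res (R : fieldType) (N : nat) (e : rel 'I_N) (i j : 'I_N) : R :=
  let u : 'rV[R]_N := delta_mx 0 i - delta_mx 0 j in
  let v := u *m pinvmx (laplacian R e) in
  v 0 i - v 0 j.

Definition add_deg_kirchhoff (R : fieldType) (N : nat) (e : rel 'I_N) : R :=
  \sum_(i < N) \sum_(j < N | (i < j)%N) ((deg e i + deg e j)%:R * eff_res R e i j).

From HB Require Import structures.
From mathcomp Require Import all_boot all_order all_algebra.
From mathcomp Require Import zify ring lra.
Import Order.TTheory GRing.Theory Num.Theory.
Set Implicit Arguments. Unset Strict Implicit. Unset Printing Implicit Defensive.
Local Open Scope ring_scope.

(* Thomson's principle bounds the effective resistance from below:
   R_ij >= (x_i - x_j)^2 / sum_{ab edge} (x_a - x_b)^2 for every potential x.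
   In a tree, the indicator of the component of i left after cutting the first
   edge of the path from i to j gives R_ij >= 1, and when i and j are not
   adjacent the difference of two such indicators gives R_ij >= 2.  Hence
   R^+(T) >= sum_{i<j} (d_i + d_j) (2 - a_ij) = 4 (N - 1)^2 - sum_i d_i^2.
   A degree sequence with M ones summing to 2 (N - 1) satisfies
   sum_i d_i^2 <= M^2 - 3 M + 4 N - 4 (attained by a spider), and the stated
   bound is below 4 (N - 1)^2 minus this quantity. *)

Section PairSums.
Variables (V : nmodType) (N : nat) (e : rel 'I_N).

Lemma sum_edge_set (h : 'I_N -> 'I_N -> V) :
  \sum_(p in edge_set e) h p.1 p.2 =
  \sum_(a < N) \sum_(b < N | (a < b)%N) (if e a b then h a b else 0).
Proof.
rewrite (pair_big_dep predT (fun a b : 'I_N => (a < b)%N)) /= big_mkcond.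
rewrite [RHS]big_mkcond; apply: eq_bigr => p _.
by rewrite /edge_set inE; case: (e p.1 p.2); case: (p.1 < p.2)%N.
Qed.

Lemma sum_lt_pairs_sym (g : 'I_N -> 'I_N -> V) : symmetric e -> irreflexive e ->
  \sum_(a < N) \sum_(b < N | (a < b)%N) (if e a b then g a b + g b a else 0) =
  \sum_(a < N) \sum_(b < N) (if e a b then g a b else 0).
Proof.
move=> e_sym e_irr.
have split_ab (a b : 'I_N) : (if (a < b)%N then (if e a b then g a b + g b a else 0) else 0) =
    (if (a < b)%N && e a b then g a b else 0) + (if (a < b)%N && e a b then g b a else 0).
  by case: (a < b)%N; case: (e a b); rewrite ?addr0.
under eq_bigr => a _ do rewrite big_mkcond (eq_bigr _ (fun b _ => split_ab a b)) big_split.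
rewrite big_split /= [X in _ + X]exchange_big -big_split /=.
apply: eq_bigr => a _; rewrite -big_split; apply: eq_bigr => b _ /=.
rewrite (e_sym b a); case: (ltngtP a b) => [_|_|/val_inj ->]; rewrite ?addr0 ?add0r //.
by rewrite e_irr ?addr0.
Qed.

End PairSums.

Lemma deg_sum N (e : rel 'I_N) a : deg e a = (\sum_(b < N) (if e a b then 1 else 0))%N.
Proof.
by rewrite /deg -sum1_card big_mkcond; apply: eq_bigr => b _; rewrite inE.
Qed.

Lemma natr_deg_sum (R : pzSemiRingType) N (e : rel 'I_N) a :
  (deg e a)%:R = \sum_(b < N) (if e a b then 1 else 0) :> R.
Proof. by rewrite deg_sum natr_sum; apply: eq_bigr => b _; case: (e a b). Qed.

Lemma sum_deg N (e : rel 'I_N) : simple_graph e ->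
  (\sum_(a < N) deg e a)%N = (#|edge_set e| * 2)%N.
Proof.
move=> [e_sym e_irr]; rewrite -sum_nat_const (sum_edge_set e (fun _ _ => 2%N)).
rewrite (sum_lt_pairs_sym (fun _ _ => 1%N)) //.
by apply: eq_bigr => a _; rewrite deg_sum.
Qed.

Section EdgeLaplacian.
Variables (R : comRingType) (N : nat).
Implicit Types (F : {set 'I_N * 'I_N}) (x y : 'rV[R]_N) (p : 'I_N * 'I_N).

Definition edge_vec p : 'rV[R]_N := delta_mx 0 p.1 - delta_mx 0 p.2.

Definition edge_laplacian F : 'M[R]_N := \sum_(p in F) (edge_vec p)^T *m edge_vec p.

Lemma mul_edge_vec_tr x p : (x *m (edge_vec p)^T) 0 0 = x 0 p.1 - x 0 p.2.
Proof. by rewrite linearB /= !trmx_delta mulmxBr -!colE !mxE. Qed.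

Lemma edge_laplacian_form F x y :
  (x *m edge_laplacian F *m y^T) 0 0 =
  \sum_(p in F) (x 0 p.1 - x 0 p.2) * (y 0 p.1 - y 0 p.2).
Proof.
rewrite /edge_laplacian mulmx_sumr mulmx_suml summxE; apply: eq_bigr => p _.
rewrite !mulmxA -mulmxA [LHS]mxE big_ord1 mul_edge_vec_tr.
by rewrite -[edge_vec p *m y^T]trmxK trmx_mul trmxK mxE mul_edge_vec_tr.
Qed.

Lemma tr_edge_laplacian F : (edge_laplacian F)^T = edge_laplacian F.
Proof.
by rewrite /edge_laplacian raddf_sum; apply: eq_bigr => p _ /=; rewrite trmx_mul trmxK.
Qed.

Lemma edge_vec_ones p : edge_vec p *m const_mx 1 = 0 :> 'cV[R]_1.
Proof.
apply/matrixP => i j; rewrite !ord1 -[_ *m _]trmxK trmx_mul trmx_const mxE.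
by rewrite mul_edge_vec_tr !mxE subrr.
Qed.

Lemma edge_laplacian_ones F : edge_laplacian F *m const_mx 1 = 0 :> 'cV[R]_N.
Proof.
by rewrite /edge_laplacian mulmx_suml big1 // => p _; rewrite -mulmxA edge_vec_ones mulmx0.
Qed.

End EdgeLaplacian.

Lemma mxrank_edge_laplacian (R : fieldType) N (F : {set 'I_N * 'I_N}) :
  (\rank (edge_laplacian R F) <= #|F|)%N.
Proof.
rewrite /edge_laplacian -sum1_card.
elim/big_ind2: _ => [|A1 n1 A2 n2 le1 le2|p _]; first by rewrite mxrank0.
- exact: leq_trans (mxrank_add _ _) (leq_add le1 le2).
- exact: mulmx_max_rank.
Qed.

Definition edge_rel N (F : {set 'I_N * 'I_N}) : rel 'I_N :=
  fun a b => ((a, b) \in F) || ((b, a) \in F).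

Lemma edge_rel_sym N (F : {set 'I_N * 'I_N}) : symmetric (edge_rel F).
Proof. by move=> a b; rewrite /edge_rel orbC. Qed.

Lemma connect_const (T : finType) (U : Type) (r : rel T) (f : T -> U) :
  {homo f : a b / r a b >-> a = b} -> {homo f : a b / connect r a b >-> a = b}.
Proof.
move=> f_r a b /connectP [s r_s ->].
by elim: s a r_s => [|c s IHs] a //= /andP [/f_r -> /IHs].
Qed.

Section RealEdgeLaplacian.
Variables (R : realFieldType) (N : nat) (F : {set 'I_N * 'I_N}).
Local Notation L := (edge_laplacian R F).
Implicit Types (x : 'rV[R]_N) (p : 'I_N * 'I_N).

Definition energy (x : 'rV[R]_N) : R := \sum_(p in F) (x 0 p.1 - x 0 p.2) ^+ 2.

Lemma energyE x : energy x = (x *m L *m x^T) 0 0.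
Proof. by rewrite edge_laplacian_form; apply: eq_bigr => p _; rewrite expr2. Qed.

Lemma edge_laplacian_kernel x p : x *m L = 0 -> p \in F -> x 0 p.1 = x 0 p.2.
Proof.
move=> xL0 pF; have := energyE x; rewrite xL0 mul0mx mxE.
move/psumr_eq0P => /(_ (fun q _ => sqr_ge0 _) p pF)/eqP.
by rewrite sqrf_eq0 subr_eq0 => /eqP.
Qed.

End RealEdgeLaplacian.

Lemma mxrank_edge_laplacian_connected (R : realFieldType) N (F : {set 'I_N * 'I_N}) :
  (forall a b, connect (edge_rel F) a b) -> (N <= (\rank (edge_laplacian R F)).+1)%N.
Proof.
case: N F => [|n] F conn //.
have: (kermx (edge_laplacian R F) <= (const_mx 1 : 'rV[R]_n.+1))%MS.
  apply/row_subP => k; set r := row k _.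
  have rL0 : r *m edge_laplacian R F = 0 by rewrite /r -row_mul mulmx_ker row0.
  clearbody r.
  suff -> : r = r 0 0 *: const_mx 1 by apply: scalemx_sub.
  apply/rowP => j; rewrite !mxE mulr1.
  apply: (connect_const (f := r 0) _ (conn j 0)) => a b /orP [] ab.
    exact: edge_laplacian_kernel ab.
  exact/esym/(edge_laplacian_kernel rL0 ab).
move/mxrankS; rewrite mxrank_ker.
have := rank_leq_row (const_mx 1 : 'rV[R]_n.+1); lia.
Qed.

Lemma edge_vec_sub_edge_laplacian (R : realFieldType) N (F : {set 'I_N * 'I_N}) i j :
  (forall a b, connect (edge_rel F) a b) ->
  (edge_vec R (i, j) <= edge_laplacian R F)%MS.
Proof.
move=> conn; set K := kermx (const_mx 1 : 'cV[R]_N).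
have LK : (edge_laplacian R F <= K)%MS by apply/sub_kermxP; apply: edge_laplacian_ones.
have uK : (edge_vec R (i, j) <= K)%MS by apply/sub_kermxP; apply: edge_vec_ones.
apply: submx_trans uK _.
have rank1 : \rank (const_mx 1 : 'cV[R]_N) = 1%N.
  apply/eqP; rewrite eqn_leq rank_leq_col lt0n mxrank_eq0.
  by apply/eqP => /matrixP/(_ i 0)/eqP; rewrite !mxE oner_eq0.
have /leqifP := mxrank_leqif_sup LK; case: ifP => // _.
have := mxrank_edge_laplacian_connected R conn; rewrite /K mxrank_ker rank1.
have := ltn_ord i; lia.
Qed.

Lemma cauchy_schwarz_div (R : realFieldType) (I : finType) (P : pred I) (a b : I -> R) :
  (\sum_(k | P k) a k * b k) ^+ 2 / \sum_(k | P k) a k ^+ 2 <= \sum_(k | P k) b k ^+ 2.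
Proof.
set c := \sum_(k | P k) a k ^+ 2; set s := \sum_(k | P k) a k * b k.
set r := \sum_(k | P k) b k ^+ 2.
have r_ge0 : 0 <= r by apply: sumr_ge0 => k _; apply: sqr_ge0.
have [->|c_neq0] := eqVneq c 0; first by rewrite invr0 mulr0.
have : 0 <= \sum_(k | P k) (s / c * a k - b k) ^+ 2.
  by apply: sumr_ge0 => k _; apply: sqr_ge0.
rewrite (eq_bigr (fun k => (s / c) ^+ 2 * a k ^+ 2 - 2 * (s / c) * (a k * b k) + b k ^+ 2));
  last by move=> k _; ring.
rewrite big_split sumrB /= -!mulr_sumr -/c -/s -/r.
have -> : (s / c) ^+ 2 * c - 2 * (s / c) * s = - (s ^+ 2 / c) by field.
lra.
Qed.

Definition resistance (R : fieldType) N (F : {set 'I_N * 'I_N}) (i j : 'I_N) : R :=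
  let v := edge_vec R (i, j) *m pinvmx (edge_laplacian R F) in v 0 i - v 0 j.

(* [x 0 i - x 0 j] is the Laplacian form of [x] against the potential [v] of a
   unit current from [i] to [j]; the bound is Cauchy-Schwarz for that form. *)
Lemma resistance_ge_energy_ratio (R : realFieldType) N (F : {set 'I_N * 'I_N})
    (i j : 'I_N) (x : 'rV[R]_N) :
  (forall a b, connect (edge_rel F) a b) ->
  (x 0 i - x 0 j) ^+ 2 / energy F x <= resistance R F i j.
Proof.
move=> conn; rewrite /resistance; set v := _ *m pinvmx _.
have vL : v *m edge_laplacian R F = edge_vec R (i, j).
  by rewrite mulmxKpV //; apply: edge_vec_sub_edge_laplacian.
have potential_diff (y : 'rV[R]_N) : y 0 i - y 0 j = (y *m edge_laplacian R F *m v^T) 0 0.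
  by rewrite -mulmxA -tr_edge_laplacian -trmx_mul vL mul_edge_vec_tr.
rewrite potential_diff (potential_diff v) !edge_laplacian_form.
under [X in _ <= X]eq_bigr => p _ do rewrite -expr2.
exact: cauchy_schwarz_div.
Qed.

Lemma laplacian_edge_set (R : comRingType) N (e : rel 'I_N) :
  simple_graph e -> laplacian R e = edge_laplacian R (edge_set e).
Proof.
move=> [e_sym e_irr]; apply/matrixP => i j.
have -> : edge_laplacian R (edge_set e) i j =
    ((delta_mx 0 i : 'rV_N) *m edge_laplacian R (edge_set e) *m (delta_mx 0 j : 'rV_N)^T) 0 0.
  by rewrite trmx_delta -rowE -colE !mxE.
rewrite edge_laplacian_form.
rewrite (sum_edge_set e (fun a b => ((delta_mx 0 i : 'rV[R]_N) 0 a - delta_mx 0 i 0 b)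
   * ((delta_mx 0 j : 'rV[R]_N) 0 a - delta_mx 0 j 0 b))).
pose g a b : R := (a == i)%:R * ((a == j)%:R - (b == j)%:R).
transitivity (\sum_(a < N) \sum_(b < N | (a < b)%N) (if e a b then g a b + g b a else 0));
  last by apply: eq_bigr => a _; apply: eq_bigr => b _; case: (e a b); rewrite // /g !mxE; ring.
rewrite sum_lt_pairs_sym // (bigD1 i) //= [X in _ + X]big1 ?addr0; last first.
  by move=> a /negbTE ai; apply: big1 => b _; rewrite /g ai mul0r if_same.
rewrite /laplacian mxE; under eq_bigr => b _ do rewrite /g eqxx mul1r.
case: eqP => [<-|/eqP ij].
  rewrite natr_deg_sum; apply: eq_bigr => b _; case: ifP => // eib.
  have /negbTE -> : b != i by apply: contraTneq eib => ->; rewrite e_irr.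
  by rewrite subr0.
rewrite (bigD1 j) //= [X in _ + X]big1 ?addr0; last first.
  by move=> b /negbTE bj; rewrite bj subrr if_same.
by rewrite eqxx sub0r; case: (e i j).
Qed.

Lemma eff_res_resistance (R : fieldType) N (e : rel 'I_N) i j :
  simple_graph e -> eff_res R e i j = resistance R (edge_set e) i j.
Proof. by move=> e_simple; rewrite /eff_res laplacian_edge_set. Qed.

Lemma connected_card_edges N (F : {set 'I_N * 'I_N}) :
  (forall a b, connect (edge_rel F) a b) -> (N <= #|F|.+1)%N.
Proof.
move=> conn; apply: leq_trans (mxrank_edge_laplacian_connected rat conn) _.
by rewrite ltnS mxrank_edge_laplacian.
Qed.

Definition uedge N (a b : 'I_N) : 'I_N * 'I_N := if (a < b)%N then (a, b) else (b, a).

Lemma uedge_cases N (a b : 'I_N) : uedge a b = (a, b) \/ uedge a b = (b, a).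
Proof. by rewrite /uedge; case: ifP; [left | right]. Qed.

Lemma uedge_eq_endpoint N (a b c d : 'I_N) : uedge a b = uedge c d -> (a == c) || (a == d).
Proof.
case: (uedge_cases a b) (uedge_cases c d) => -> [] -> /eqP;
  by rewrite xpair_eqE => /andP [/eqP h1 /eqP h2]; rewrite ?h1 ?h2 eqxx ?orbT.
Qed.

Section SimpleGraph.
Variables (N : nat) (e : rel 'I_N).
Hypothesis e_simple : simple_graph e.

Lemma edge_rel_edge_set a b : e a b -> edge_rel (edge_set e) a b.
Proof.
have [e_sym e_irr] := e_simple; move=> eab; rewrite /edge_rel /edge_set !inE /= eab.
rewrite e_sym eab /=; case: ltngtP => // /val_inj ab.
by move: eab; rewrite ab e_irr.
Qed.

Lemma uedge_in_edge_set a b : e a b -> uedge a b \in edge_set e.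
Proof.
have [e_sym e_irr] := e_simple; move=> eab.
rewrite /uedge /edge_set; case: ltngtP => [ab|ba|/val_inj ab]; rewrite inE /=.
- by rewrite eab ab.
- by rewrite e_sym eab ba.
- by move: eab; rewrite ab e_irr.
Qed.
End SimpleGraph.

Lemma edge_rel_setD1 N (F : {set 'I_N * 'I_N}) q a b :
  (a, b) != q -> (b, a) != q -> edge_rel (F :\ q) a b = edge_rel F a b.
Proof. by move=> abq baq; rewrite /edge_rel !inE abq baq. Qed.

Lemma sqr_natr_bool_diff (R : pzRingType) (b c : bool) :
  (b%:R - c%:R) ^+ 2 = (b != c)%:R :> R.
Proof. by case: b; case: c; rewrite /= ?subrr ?subr0 ?sub0r ?sqrrN ?expr1n ?expr0n. Qed.

Section Tree.
Variables (N : nat) (e : rel 'I_N).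
Hypothesis e_tree : is_tree e.
Local Notation E := (edge_set e).

Lemma tree_simple : simple_graph e.
Proof. by case: e_tree. Qed.

Lemma tree_card_edges : #|E| = (N - 1)%N.
Proof. by case: e_tree. Qed.

Lemma tree_edge_rel_connected a b : connect (edge_rel E) a b.
Proof.
case: e_tree => _ conn _; apply: connect_sub (conn a b) => x y /edge_rel_edge_set xy.
exact/connect1/xy/tree_simple.
Qed.

Lemma tree_edge_disconnects i a : e i a -> ~~ connect (edge_rel (E :\ uedge i a)) i a.
Proof.
move=> eia; apply/negP => conn_ia; set F := E :\ uedge i a.
have F_sym := sym_connect_sym (edge_rel_sym F).
have conn_q u w : (u, w) = uedge i a -> connect (edge_rel F) u w.
  by case: (uedge_cases i a) => -> [-> ->]; rewrite // F_sym.
have conn x y : connect (edge_rel F) x y.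
  apply: connect_sub (tree_edge_rel_connected x y) => u w Euw.
  have [/conn_q //|uwq] := eqVneq (u, w) (uedge i a).
  have [/conn_q|wuq] := eqVneq (w, u) (uedge i a); first by rewrite F_sym.
  by apply: connect1; rewrite edge_rel_setD1.
have ia : i != a by apply: contraTneq eia => ->; case: tree_simple => _ ->.
have := max_card [set i; a]; rewrite cards2 ia card_ord /=.
have := connected_card_edges conn; have := cardsD1 (uedge i a) E.
rewrite uedge_in_edge_set ?tree_card_edges //; last exact: tree_simple.
rewrite -/F add1n => <-; lia.
Qed.

Definition side i a : {set 'I_N} := [set k | connect (edge_rel (E :\ uedge i a)) i k].

Lemma side_cut i a : e i a ->
  [/\ i \in side i a, a \notin side i a &
      {in E, forall p, ((p.1 \in side i a) != (p.2 \in side i a)) = (p == uedge i a)}].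
Proof.
move=> eia; have iS : i \in side i a by rewrite inE connect0.
have aS : a \notin side i a by rewrite inE; apply: tree_edge_disconnects.
split=> // p Ep; have [->|pq] := eqVneq p (uedge i a).
  by case: (uedge_cases i a) => -> /=; rewrite iS (negbTE aS).
apply/negbTE; rewrite negbK !inE; apply/eqP.
apply: (same_connect1r (sym_connect_sym (edge_rel_sym _))).
by case: p Ep pq => p1 p2 Ep pq; rewrite /edge_rel in_setD1 pq Ep.
Qed.

Lemma exists_separating_edge i j : i != j -> exists2 a, e i a & j \notin side i a.
Proof.
move=> ij; case: e_tree => _ /(_ i j) /connectP [s es j_last] _.
case: (shortenP es) j_last => [[|a t]] /=; first by move=> _ _ _ ji; rewrite ji eqxx in ij.
move=> /andP [eia et] /andP [it _] _ ->; exists a => //.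
rewrite inE; apply: contra (tree_edge_disconnects eia) => /connect_trans; apply.
rewrite (sym_connect_sym (edge_rel_sym _)); apply/connectP; exists t => //.
apply: (sub_in_path (P := [pred k | k != i])) _ _ et.
  move=> u w /[!inE] ui wi /(edge_rel_edge_set tree_simple).
  rewrite edge_rel_setD1 //; case: (uedge_cases i a) => ->;
  by rewrite xpair_eqE negb_and ?ui ?wi ?orbT.
by apply/allP => k kt; rewrite inE; apply: contraNneq it => <-.
Qed.

Section Resistance.
Variable R : realFieldType.

Lemma tree_eff_res i j : eff_res R e i j = resistance R E i j.
Proof. exact/eff_res_resistance/tree_simple. Qed.

Definition indicator (S : {set 'I_N}) : 'rV[R]_N := \row_k (k \in S)%:R.

Lemma indicator_diff S p :
  indicator S 0 p.1 - indicator S 0 p.2 = (p.1 \in S)%:R - (p.2 \in S)%:R.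
Proof. by rewrite !mxE. Qed.

Lemma side_diff_sqr i a p : e i a -> p \in E ->
  ((p.1 \in side i a)%:R - (p.2 \in side i a)%:R) ^+ 2 = (p == uedge i a)%:R :> R.
Proof.
by move=> eia Ep; have [_ _ /(_ p Ep) <-] := side_cut eia; rewrite sqr_natr_bool_diff.
Qed.

Lemma side_diff_eq0 i a p : e i a -> p \in E -> p != uedge i a ->
  (p.1 \in side i a)%:R - (p.2 \in side i a)%:R = 0 :> R.
Proof.
move=> eia Ep pq; have [_ _ /(_ p Ep)] := side_cut eia; rewrite (negbTE pq).
by move/negbFE/eqP ->; rewrite subrr.
Qed.

Lemma sum_edge_set_pred1 (q : 'I_N * 'I_N) : q \in E -> \sum_(p in E) (p == q)%:R = 1 :> R.
Proof.
by move=> Eq; rewrite (bigD1 q) //= eqxx big1 ?addr0 // => p /andP [_ /negbTE ->].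
Qed.

Lemma tree_eff_res_ge1 i j : i != j -> 1 <= eff_res R e i j.
Proof.
move=> ij; have [a eia jS] := exists_separating_edge ij.
have [iS _ _] := side_cut eia.
have energy1 : energy E (indicator (side i a)) = 1.
  rewrite -(sum_edge_set_pred1 (uedge_in_edge_set tree_simple eia)).
  by apply: eq_bigr => p Ep; rewrite indicator_diff side_diff_sqr.
have := resistance_ge_energy_ratio i j (indicator (side i a)) tree_edge_rel_connected.
by rewrite energy1 !mxE iS (negbTE jS) subr0 expr1n divr1 tree_eff_res.
Qed.

Lemma tree_eff_res_ge2 i j : i != j -> ~~ e i j -> 2 <= eff_res R e i j.
Proof.
move=> ij nij; have ji : j != i by rewrite eq_sym.
have [a eia jSa] := exists_separating_edge ij.
have [b ejb iSb] := exists_separating_edge ji.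
have [[iSa _ _] [jSb _ _]] := (side_cut eia, side_cut ejb).
have [Ea Eb] := (uedge_in_edge_set tree_simple eia, uedge_in_edge_set tree_simple ejb).
have ba : uedge j b != uedge i a.
  apply/eqP => /uedge_eq_endpoint /orP [/eqP ji'|/eqP ja].
  - by rewrite ji' eqxx in ij.
  - by rewrite ja eia in nij.
set x := indicator (side i a) - indicator (side j b).
have energy2 : energy E x = 2.
  transitivity (\sum_(p in E) ((p == uedge i a)%:R + (p == uedge j b)%:R) : R).
    apply: eq_bigr => p Ep; rewrite !mxE.
    rewrite (_ : _ - _ = ((p.1 \in side i a)%:R - (p.2 \in side i a)%:R)
                     - ((p.1 \in side j b)%:R - (p.2 \in side j b)%:R)); last by ring.
    have [->|pa] := eqVneq p (uedge i a).
      have ab : uedge i a != uedge j b by rewrite eq_sym.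
      by rewrite (side_diff_eq0 ejb Ea ab) subr0 side_diff_sqr // eqxx (negbTE ab) addr0.
    by rewrite (side_diff_eq0 eia Ep pa) sub0r sqrrN side_diff_sqr // add0r.
  by rewrite big_split /= !sum_edge_set_pred1.
have := resistance_ge_energy_ratio i j x tree_edge_rel_connected.
rewrite energy2 !mxE iSa (negbTE iSb) (negbTE jSa) jSb tree_eff_res.
by rewrite /= (_ : (1 - 0 - (0 - 1)) ^+ 2 / 2 = 2 :> R) //; field.
Qed.
End Resistance.

End Tree.

Lemma sum_lt_pairs_add (R : pzSemiRingType) N (f : 'I_N -> R) :
  \sum_(a < N) \sum_(b < N | (a < b)%N) (f a + f b) = (N - 1)%:R * \sum_(a < N) f a.
Proof.
have neq_sym : symmetric (fun a b : 'I_N => a != b) by move=> a b; rewrite eq_sym.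
transitivity (\sum_(a < N) \sum_(b < N | (a < b)%N) (if a != b then f a + f b else 0)).
  apply: eq_bigr => a _; apply: eq_bigr => b ab.
  by rewrite (_ : a != b) //; apply: contraTneq ab => ->; rewrite ltnn.
rewrite sum_lt_pairs_sym // ?mulr_sumr => [|a]; last by rewrite eqxx.
apply: eq_bigr => a _; rewrite -big_mkcond sumr_const mulr_natl subn1.
rewrite -[in RHS](card_ord N) -(cardC1 a); congr (_ *+ _).
by apply: eq_card => b; rewrite !inE eq_sym.
Qed.

Lemma sum_lt_pairs_adj_deg (R : pzSemiRingType) N (e : rel 'I_N) : simple_graph e ->
  \sum_(a < N) \sum_(b < N | (a < b)%N) (if e a b then (deg e a)%:R + (deg e b)%:R else 0)
  = \sum_(a < N) (deg e a)%:R ^+ 2 :> R.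
Proof.
move=> [e_sym e_irr]; rewrite (sum_lt_pairs_sym (fun a _ => (deg e a)%:R)) //.
apply: eq_bigr => a _; rewrite expr2 [X in _ * X]natr_deg_sum mulr_sumr.
by apply: eq_bigr => b _; case: (e a b); rewrite ?mulr1 ?mulr0.
Qed.

Lemma tree_sum_deg (R : pzSemiRingType) N (e : rel 'I_N) : is_tree e ->
  \sum_(a < N) (deg e a)%:R = 2 * (N - 1)%:R :> R.
Proof.
case=> e_simple _ card_E.
by rewrite -natr_sum sum_deg // card_E mulnC natrM.
Qed.

Lemma tree_eff_res_ge (R : realFieldType) N (e : rel 'I_N) i j : is_tree e -> i != j ->
  2 - (e i j)%:R <= eff_res R e i j.
Proof.
move=> e_tree ij; case: (boolP (e i j)) => eij /=.
  by rewrite (_ : 2 - 1 = 1 :> R) ?tree_eff_res_ge1 //; lra.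
by rewrite subr0 tree_eff_res_ge2.
Qed.

Lemma add_deg_kirchhoff_ge (R : realFieldType) N (e : rel 'I_N) : is_tree e ->
  4 * (N - 1)%:R ^+ 2 - \sum_(a < N) (deg e a)%:R ^+ 2 <= add_deg_kirchhoff R e.
Proof.
move=> e_tree; have e_simple := tree_simple e_tree.
apply: (@le_trans _ _ (\sum_(a < N) \sum_(b < N | (a < b)%N)
    ((deg e a + deg e b)%:R * (2 - (e a b)%:R)))); last first.
  apply: ler_sum => a _; apply: ler_sum => b ab; apply: ler_wpM2l => //.
  by apply: tree_eff_res_ge => //; apply: contraTneq ab => ->; rewrite ltnn.
rewrite le_eqVlt; apply/orP; left; apply/eqP.
transitivity (2 * \sum_(a < N) \sum_(b < N | (a < b)%N) ((deg e a)%:R + (deg e b)%:R)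
  - \sum_(a < N) \sum_(b < N | (a < b)%N)
      (if e a b then (deg e a)%:R + (deg e b)%:R else 0) : R).
  by rewrite sum_lt_pairs_add sum_lt_pairs_adj_deg // tree_sum_deg //; ring.
rewrite mulr_sumr -sumrB; apply: eq_bigr => a _.
rewrite mulr_sumr -sumrB; apply: eq_bigr => b _.
by case: (e a b); rewrite natrD /=; ring.
Qed.

Lemma sum_sqr_deg_seq_le (R : realFieldType) (I : finType) (L : {set I}) (d : I -> R) :
  (forall k, k \in L -> d k = 1) -> (forall k, k \notin L -> 2 <= d k) ->
  \sum_k d k = 2 * (#|I|%:R - 1) ->
  \sum_k d k ^+ 2 <= #|L|%:R ^+ 2 - 3 * #|L|%:R + 4 * #|I|%:R - 4.
Proof.
(* The excess [z k] is nonnegative and sums to [m - 2], so it is at most [m - 2];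
   on that range [d k ^+ 2] is below a linear function of [z k]. *)
move=> dL dnL sum_d; set m : R := #|L|%:R.
pose l k : R := (k \in L)%:R; pose z k := d k - 2 + l k.
have sum_l : \sum_k l k = m.
  rewrite (eq_bigr (fun k => if k \in L then 1 else 0)) => [|k _]; last by rewrite /l; case: ifP.
  by rewrite -big_mkcond sumr_const.
have z_ge0 k : 0 <= z k.
  rewrite /z /l; case: (boolP (k \in L)) => [/dL ->|/dnL]; rewrite /=; lra.
have sum_z : \sum_k z k = m - 2.
  by rewrite big_split sumrB /= sum_d sum_l sumr_const -mulr_natl; ring.
have z_le k : z k <= m - 2.
  by rewrite -sum_z (bigD1 k) //= lerDl sumr_ge0.
have d_sqr_le k : d k ^+ 2 <= (m + 2) * z k + 4 - 3 * l k.
  move: (z_ge0 k) (z_le k); rewrite /z /l.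
  by case: (boolP (k \in L)) => [/dL ->|/dnL d2] /=; nra.
apply: le_trans (ler_sum _ (fun k _ => d_sqr_le k)) _.
rewrite sumrB big_split /= -!mulr_sumr sum_z sum_l sumr_const -mulr_natl.
by rewrite le_eqVlt; apply/orP; left; apply/eqP; ring.
Qed.

Lemma tree_deg_gt0 N (e : rel 'I_N) k : is_tree e -> (1 < N)%N -> (0 < deg e k)%N.
Proof.
move=> e_tree N_gt1; have [j kj] : exists j, k != j.
  case: (eqVneq k (Ordinal (ltnW N_gt1))) => [->|kj]; last by exists (Ordinal (ltnW N_gt1)).
  by exists (Ordinal N_gt1); rewrite -val_eqE.
have [a eka _] := exists_separating_edge e_tree kj.
by apply/card_gt0P; exists a; rewrite inE.
Qed.

Lemma tree_leaves_lt N (e : rel 'I_N) : is_tree e -> (2 < N)%N -> (#|leaves e| < N)%N.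
Proof.
move=> e_tree N_gt2; rewrite ltnNge; apply/negP => N_le.
have all_leaves : leaves e = [set: 'I_N].
  by apply/eqP; rewrite eqEcard subsetT cardsT card_ord.
have := sum_deg (tree_simple e_tree); rewrite (tree_card_edges e_tree).
rewrite (eq_bigr (fun _ => 1%N)) => [|k _]; last first.
  by have := in_setT k; rewrite -all_leaves inE => /eqP.
by rewrite sum_nat_const card_ord; lia.
Qed.

Lemma tree_sum_sqr_deg_le (R : realFieldType) N (e : rel 'I_N) : is_tree e -> (1 < N)%N ->
  \sum_(a < N) (deg e a)%:R ^+ 2
  <= #|leaves e|%:R ^+ 2 - 3 * #|leaves e|%:R + 4 * N%:R - 4 :> R.
Proof.
move=> e_tree N_gt1; rewrite -[in N%:R](card_ord N).
apply: sum_sqr_deg_seq_le => [k|k|].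
- by rewrite inE => /eqP ->.
- rewrite inE (ler_nat R 2) => deg_neq1; have := tree_deg_gt0 k e_tree N_gt1; lia.
- by rewrite tree_sum_deg // card_ord natrB ?(ltnW N_gt1).
Qed.

Lemma leaf_bound_le_deg_bound (R : realFieldType) (n m : R) :
  3 <= n -> 2 <= m -> m <= n - 1 ->
  n * (n - 2) + 2 * (n - 1) * (m + (n - m) ^+ 2 / (2 * (n - 1) - m)) - 2 * (n - 1)
  <= 4 * (n - 1) ^+ 2 - (m ^+ 2 - 3 * m + 4 * n - 4).
Proof.
move=> n_ge3 m_ge2 m_le.
set D := 2 * (n - 1) - m; have D_gt0 : 0 < D by rewrite /D; lra.
set q := (n - m) ^+ 2 / D; have qD : q * D = (n - m) ^+ 2 by rewrite /q divfK ?gt_eqF.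
(* In the variables [s, t >= 0], clearing the denominator [D] leaves a
   polynomial with nonnegative coefficients. *)
set s := m - 2; set t := n - m - 1.
have s_ge0 : 0 <= s by rewrite /s; lra.
have t_ge0 : 0 <= t by rewrite /t; lra.
set W := 4 * (n - 1) ^+ 2 - (m ^+ 2 - 3 * m + 4 * n - 4) - n * (n - 2)
         - 2 * (n - 1) * m + 2 * (n - 1).
have W_expand : W * D - 2 * (n - 1) * (n - m) ^+ 2 =
  2 + 8 * t + 10 * t ^+ 2 + 4 * t ^+ 3 + 3 * s + 12 * s * t + 9 * s * t ^+ 2
  + s ^+ 2 + 4 * s ^+ 2 * t by rewrite /W /D /s /t; ring.
have : 0 <= D * (W - 2 * (n - 1) * q).
  rewrite (_ : D * _ = W * D - 2 * (n - 1) * (q * D)); last by ring.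
  rewrite qD W_expand; have := mulr_ge0 s_ge0 t_ge0.
  have := sqr_ge0 t; have := sqr_ge0 s; nra.
rewrite pmulr_rge0 // /W; lra.
Qed.

Unset Implicit Arguments.

Theorem corollary4 (R : realFieldType) (N M : nat) (e : rel 'I_N) :
  is_tree e -> (2 < N)%N -> #|leaves e| = M -> (2 <= M)%N ->
  (N * (N - 2))%:R
    + 2 * (N - 1)%:R * (M%:R + ((N - M)%:R) ^+ 2 / (2 * (N - 1)%:R - M%:R))
    - 2 * (N - 1)%:R
  <= add_deg_kirchhoff R e.
Proof.
move=> e_tree N_gt2 leaves_M M_ge2.
have M_lt_N : (M < N)%N by rewrite -leaves_M tree_leaves_lt.
apply: le_trans (add_deg_kirchhoff_ge R e_tree).
apply: le_trans (lerB (lexx _) (tree_sum_sqr_deg_le R e_tree (ltnW N_gt2))).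
have [N_ge1 N_ge2 M_le_N] : [/\ (1 <= N)%N, (2 <= N)%N & (M <= N)%N] by split; lia.
rewrite leaves_M natrM !natrB //.
apply: leaf_bound_le_deg_bound.
- by rewrite (ler_nat R 3).
- by rewrite (ler_nat R 2).
- by rewrite lerBrDr natr1 ler_nat.
Qed.
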